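(* For every $n\in\mathbb{N}_0$ and $m=1,\ldots,n+1$, \begin{align*} \mathbf{X}^{0,\dagger}_n&=r^n\Big[\tfrac{n+1}{2}U^0_n+\tfrac12U^1_n\mathbf{e}_1+\tfrac12V^1_n\mathbf{e}_2\Big],\\ \mathbf{X}^{m,\dagger}_n&=r^n\Big[\tfrac{n+m+1}{2}U^m_n+\tfrac14R^{m,-}_n\mathbf{e}_1+\tfrac14S^{m,+}_n\mathbf{e}_2\Big],\\ \mathbf{Y}^{m,\dagger}_n&=r^n\Big[\tfrac{n+m+1}{2}V^m_n+\tfrac14S^{m,-}_n\mathbf{e}_1-\tfrac14R^{m,+}_n\mathbf{e}_2\Big], \end{align*} where $R^{m,\pm}_n=U^{m+1}_n\pm(n+m+1)(n+m)U^{m-1}_n$ and $S^{m,\pm}_n=V^{m+1}_n\pm(n+m+1)(n+m)V^{m-1}_n$.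
   Context: Quaternions $\mathbb{H}$ have basis $1,\mathbf{e}_1,\mathbf{e}_2,\mathbf{e}_3$ with $\mathbf{e}_i^2=-1$, $\mathbf{e}_1\mathbf{e}_2=\mathbf{e}_3=-\mathbf{e}_2\mathbf{e}_1$, $\mathbf{e}_2\mathbf{e}_3=\mathbf{e}_1=-\mathbf{e}_3\mathbf{e}_2$, $\mathbf{e}_3\mathbf{e}_1=\mathbf{e}_2=-\mathbf{e}_1\mathbf{e}_3$. Reduced quaternions: $\mathcal{A}=\mathrm{span}_\mathbb{R}\{1,\mathbf{e}_1,\mathbf{e}_2\}$; $x=(x_0,x_1,x_2)\in\mathbb{R}^3$ is identified with $x_0+x_1\mathbf{e}_1+x_2\mathbf{e}_2$. $\overline{D}=\partial_{x_0}-\mathbf{e}_1\partial_{x_1}-\mathbf{e}_2\partial_{x_2}$. Spherical coordinates: $x_0=r\cos\theta_1$, $x_1=r\sin\theta_1\cos\theta_2$, $x_2=r\sin\theta_1\sin\theta_2$, $r>0$, $0<\theta_1\le\pi$, $0<\theta_2\le2\pi$. $P_n$ is the Legendre polynomial, $P^m_n(t)=(1-t^2)^{m/2}\frac{d^m}{dt^m}P_n(t)$ the associated Legendre function ($P^0_n=P_n$), with $P^i_n\equiv0$ for $i\ge n+1$. $T_k$, $U_k$ are the Chebyshev polynomials of the first and second kind, with $U_{-1}=0$. Spherical harmonics: $U^l_{n}(\theta_1,\theta_2)=P^l_{n}(\cos\theta_1)T_l(\cos\theta_2)$, $V^m_{n}(\theta_1,\theta_2)=P^m_{n}(\cos\theta_1)\sin\theta_2\,U_{m-1}(\cos\theta_2)$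 (so $V^0_n=0$), and $U^l_n=V^l_n=0$ for $l\ge n+1$. The basis polynomials are $\mathbf{X}^{l,\dagger}_n:=\tfrac12\overline{D}\big(r^{n+1}U^l_{n+1}\big)$, $l=0,\ldots,n+1$, and $\mathbf{Y}^{m,\dagger}_n:=\tfrac12\overline{D}\big(r^{n+1}V^m_{n+1}\big)$, $m=1,\ldots,n+1$. *)

From Stdlib Require Import Reals Lra Arith.
Open Scope R_scope.

Record quat := mkQ { q0 : R; q1 : R; q2 : R; q3 : R }.

Definition qR (a : R) : quat := mkQ a 0 0 0.
Definition e1 : quat := mkQ 0 1 0 0.
Definition e2 : quat := mkQ 0 0 1 0.
Definition e3 : quat := mkQ 0 0 0 1.

Definition qadd (a b : quat) : quat :=
  mkQ (q0 a + q0 b) (q1 a + q1 b) (q2 a + q2 b) (q3 a + q3 b).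
Definition qopp (a : quat) : quat := mkQ (- q0 a) (- q1 a) (- q2 a) (- q3 a).
Definition qsub (a b : quat) : quat := qadd a (qopp b).
(* Hamilton product: e1 e2 = e3, e2 e3 = e1, e3 e1 = e2, ei^2 = -1 *)
Definition qmul (a b : quat) : quat :=
  mkQ (q0 a * q0 b - q1 a * q1 b - q2 a * q2 b - q3 a * q3 b)
      (q0 a * q1 b + q1 a * q0 b + q2 a * q3 b - q3 a * q2 b)
      (q0 a * q2 b - q1 a * q3 b + q2 a * q0 b + q3 a * q1 b)
      (q0 a * q3 b + q1 a * q2 b - q2 a * q1 b + q3 a * q0 b).
Definition qscale (s : R) (a : quat) : quat := qmul (qR s) a.

Definition pt := (R * R * R)%type.
Definition px0 (x : pt) : R := fst (fst x).
Definition px1 (x : pt) : R := snd (fst x).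
Definition px2 (x : pt) : R := snd x.

Definition shift (x : pt) (i : nat) (t : R) : pt :=
  match i with
  | O => (px0 x + t, px1 x, px2 x)
  | 1%nat => (px0 x, px1 x + t, px2 x)
  | _ => (px0 x, px1 x, px2 x + t)
  end.

Definition has_pderiv (f : pt -> quat) (x : pt) (i : nat) (d : quat) : Prop :=
  derivable_pt_lim (fun t => q0 (f (shift x i t))) 0 (q0 d) /\
  derivable_pt_lim (fun t => q1 (f (shift x i t))) 0 (q1 d) /\
  derivable_pt_lim (fun t => q2 (f (shift x i t))) 0 (q2 d) /\
  derivable_pt_lim (fun t => q3 (f (shift x i t))) 0 (q3 d).

Definition has_Dbar (f : pt -> quat) (x : pt) (v : quat) : Prop :=
  exists d0 d1 d2 : quat,
    has_pderiv f x 0 d0 /\ has_pderiv f x 1 d1 /\ has_pderiv f x 2 d2 /\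
    v = qsub (qsub d0 (qmul e1 d1)) (qmul e2 d2).

(* coefficient of t^j in P_n :
   P_n(t) = 2^{-n} sum_k (-1)^k C(n,k) C(2n-2k,n) t^{n-2k} *)
Definition leg_coef (n j : nat) : R :=
  if andb (j <=? n)%nat (Nat.even (n - j)) then
    let k := ((n - j) / 2)%nat in
    (-1) ^ k * C n k * C (2 * n - 2 * k) n / 2 ^ n
  else 0.

Definition legendre (n : nat) (t : R) : R :=
  sum_f_R0 (fun j => leg_coef n j * t ^ j) n.

Definition legendre_deriv (n m : nat) (t : R) : R :=
  sum_f_R0 (fun j => if (m <=? j)%nat then
                       leg_coef n j * (INR (fact j) / INR (fact (j - m))) * t ^ (j - m)
                     else 0) n.

Definition assoc_legendre (n m : nat) (t : R) : R :=
  (sqrt (1 - t ^ 2)) ^ m * legendre_deriv n m t.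

Fixpoint chebT (k : nat) (c : R) : R :=
  match k with
  | O => 1
  | S k' => match k' with
            | O => c
            | S k'' => 2 * c * chebT k' c - chebT k'' c
            end
  end.

(* chebUm1 k c = U_{k-1}(c), with U_{-1} = 0, U_0 = 1, U_1 = 2c, ... *)
Fixpoint chebUm1 (k : nat) (c : R) : R :=
  match k with
  | O => 0
  | S k' => match k' with
            | O => 1
            | S k'' => 2 * c * chebUm1 k' c - chebUm1 k'' c
            end
  end.

Definition Uharm (n l : nat) (th1 th2 : R) : R :=
  assoc_legendre n l (cos th1) * chebT l (cos th2).
Definition Vharm (n m : nat) (th1 th2 : R) : R :=
  assoc_legendre n m (cos th1) * sin th2 * chebUm1 m (cos th2).

Definition rad (x : pt) : R := sqrt (px0 x ^ 2 + px1 x ^ 2 + px2 x ^ 2).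
Definition rho (x : pt) : R := sqrt (px1 x ^ 2 + px2 x ^ 2).
Definition cth1 (x : pt) : R := px0 x / rad x.
(* cos th2, sin th2; on the x0-axis th2 is taken as 2*pi (the values of
   U^l_n, V^m_n there do not depend on th2 anyway) *)
Definition cth2 (x : pt) : R := if Req_EM_T (rho x) 0 then 1 else px1 x / rho x.
Definition sth2 (x : pt) : R := if Req_EM_T (rho x) 0 then 0 else px2 x / rho x.

Definition rU (k n l : nat) (x : pt) : R :=
  rad x ^ k * (assoc_legendre n l (cth1 x) * chebT l (cth2 x)).
Definition rV (k n m : nat) (x : pt) : R :=
  rad x ^ k * (assoc_legendre n m (cth1 x) * sth2 x * chebUm1 m (cth2 x)).

Definition Xdag_at (n l : nat) (x : pt) (v : quat) : Prop :=
  exists w, has_Dbar (fun y => qR (rU (S n) (S n) l y)) x w /\ v = qscale (1/2) w.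
Definition Ydag_at (n m : nat) (x : pt) (v : quat) : Prop :=
  exists w, has_Dbar (fun y => qR (rV (S n) (S n) m y)) x w /\ v = qscale (1/2) w.

Definition sph (r th1 th2 : R) : pt :=
  (r * cos th1, r * sin th1 * cos th2, r * sin th1 * sin th2).

Definition Rpm (sg : R) (n m : nat) (th1 th2 : R) : R :=
  Uharm n (S m) th1 th2 + sg * (INR (n + m + 1) * INR (n + m)) * Uharm n (m - 1) th1 th2.
Definition Spm (sg : R) (n m : nat) (th1 th2 : R) : R :=
  Vharm n (S m) th1 th2 + sg * (INR (n + m + 1) * INR (n + m)) * Vharm n (m - 1) th1 th2.

From Stdlib Require Import Reals Lra Lia Arith Bool FunctionalExtensionality.
Open Scope R_scope.

(* In Cartesian coordinates, r^N U^l_N = Re (x1 + i x2)^l * r^(N-l) P_N^(l)(x0/r) and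
   r^N V^l_N = Im (x1 + i x2)^l * r^(N-l) P_N^(l)(x0/r).  The first factor is a polynomial
   with partial derivatives l (x1 + i x2)^(l-1) and i l (x1 + i x2)^(l-1); the gradient of
   the second is r^(N-l-1) ((N-l) P_N^(l) u + P_N^(l+1) (e_0 - (u.e_0) u)) with u = x/r.
   Applying Dbar and passing to spherical coordinates, the claimed formulas reduce to
   expressing P_n^(m), P_n^(m+1) and P_n^(m-1) through P_(n+1)^(m) and P_(n+1)^(m+1), which
   follows from the classical Legendre recurrences differentiated m times, together with
   the three-term recurrences of the Chebyshev polynomials. *)

(** * Derivatives *)

Lemma derivable_pt_lim_eq_val f x l l' :
  derivable_pt_lim f x l -> l = l' -> derivable_pt_lim f x l'.
Proof. now intros ? <-. Qed.

Lemma derivable_pt_lim_unique_ext f h x l l' : (forall t, f t = h t) ->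
  derivable_pt_lim f x l -> derivable_pt_lim h x l' -> l = l'.
Proof.
  intros E Df Dh. apply (uniqueness_limite h x); auto.
  now apply (derivable_pt_lim_ext f).
Qed.

Lemma derivable_pt_lim_pow_comp f x l k : derivable_pt_lim f x l ->
  derivable_pt_lim (fun t => f t ^ k) x (INR k * f x ^ pred k * l).
Proof.
  intros D. eapply derivable_pt_lim_eq_val.
  - apply (derivable_pt_lim_comp f (fun y => y ^ k)); [exact D|apply derivable_pt_lim_pow].
  - ring.
Qed.

Lemma derivable_pt_lim_sqrt_comp f x l : 0 < f x -> derivable_pt_lim f x l ->
  derivable_pt_lim (fun t => sqrt (f t)) x (l / (2 * sqrt (f x))).
Proof.
  intros P D. eapply derivable_pt_lim_eq_val.
  - apply (derivable_pt_lim_comp f sqrt); [exact D|now apply derivable_pt_lim_sqrt].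
  - unfold Rdiv; ring.
Qed.

Lemma derivable_pt_lim_quot f h x l l' : h x <> 0 ->
  derivable_pt_lim f x l -> derivable_pt_lim h x l' ->
  derivable_pt_lim (fun t => f t / h t) x ((l * h x - l' * f x) / h x ^ 2).
Proof.
  intros P Df Dh. pose proof (derivable_pt_lim_div f h x l l' Df Dh P) as D.
  unfold Rsqr in D. now replace (h x ^ 2) with (h x * h x) by ring.
Qed.

Lemma derivable_pt_lim_sum (f : nat -> R -> R) d x n :
  (forall j, (j <= n)%nat -> derivable_pt_lim (f j) x (d j)) ->
  derivable_pt_lim (fun t => sum_f_R0 (fun j => f j t) n) x (sum_f_R0 d n).
Proof.
  induction n as [|n IH]; intros H; simpl.
  - apply H; lia.
  - apply derivable_pt_lim_plus; [apply IH; intros j Hj|]; apply H; lia.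
Qed.

(** * Legendre polynomials *)

Lemma INR_fact_neq_0 n : INR (fact n) <> 0.
Proof. apply not_0_INR, fact_neq_0. Qed.

Lemma legendre_deriv_derivable N l t :
  derivable_pt_lim (legendre_deriv N l) t (legendre_deriv N (S l) t).
Proof.
  unfold legendre_deriv. apply derivable_pt_lim_sum. intros j _.
  destruct (Nat.leb_spec l j) as [Hl|Hl], (Nat.leb_spec (S l) j) as [Hs|Hs];
    try lia; try apply derivable_pt_lim_const.
  all: eapply derivable_pt_lim_eq_val;
    [apply derivable_pt_lim_mult; [apply derivable_pt_lim_const|apply derivable_pt_lim_pow]|].
  - replace (j - l)%nat with (S (j - S l)) by lia. simpl pred.
    rewrite fact_simpl, mult_INR, S_INR.
    pose proof (INR_fact_neq_0 (j - S l)). pose proof (pos_INR (j - S l)).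
    field. lra.
  - replace j with l by lia. rewrite Nat.sub_diag. simpl. ring.
Qed.

Ltac derive :=
  repeat first [ apply legendre_deriv_derivable | eassumption
               | apply derivable_pt_lim_plus | apply derivable_pt_lim_minus
               | apply derivable_pt_lim_opp | apply derivable_pt_lim_mult
               | apply derivable_pt_lim_id | apply derivable_pt_lim_const
               | apply derivable_pt_lim_pow_comp ].

Lemma legendre_deriv_over N l t : (N < l)%nat -> legendre_deriv N l t = 0.
Proof.
  intros H. unfold legendre_deriv. apply sum_eq_R0. intros j Hj.
  destruct (Nat.leb_spec l j); [lia|reflexivity].
Qed.

Lemma leg_coef_parity N j k : N = (j + 2 * k)%nat ->
  leg_coef N j = (-1) ^ k * C N k * C (2 * N - 2 * k) N / 2 ^ N.
Proof.
  intros ->. unfold leg_coef.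
  replace (j + 2 * k - j)%nat with (k * 2)%nat by lia.
  rewrite Nat.even_mul, orb_true_r, Nat.div_mul by lia.
  replace (j <=? j + 2 * k)%nat with true by (symmetry; apply Nat.leb_le; lia).
  reflexivity.
Qed.

Lemma leg_coef_vanish N j :
  (N < j)%nat \/ (exists k, N = j + 2 * k + 1)%nat -> leg_coef N j = 0.
Proof.
  unfold leg_coef. intros [H|[k H]].
  - replace (j <=? N)%nat with false by (symmetry; apply Nat.leb_gt; lia). reflexivity.
  - replace (N - j)%nat with (S (k * 2)) by lia.
    rewrite Nat.even_succ, <- Nat.negb_even, Nat.even_mul, orb_true_r, andb_false_r.
    reflexivity.
Qed.

Lemma leg_coef_cases N j :
  (N < j)%nat \/ (exists k, N = j + 2 * k + 1)%nat \/ (exists k, N = j + 2 * k)%nat.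
Proof.
  destruct (Nat.lt_ge_cases N j) as [H|H]; [now left|right].
  destruct (Nat.Even_or_Odd (N - j)) as [[k Hk]|[k Hk]].
  - right; exists k; lia.
  - left; exists k; lia.
Qed.

(* Coefficientwise form of P'_(M+1) = t P'_M + (M+1) P_M. *)
Lemma leg_coef_shift M i :
  INR (S i) * leg_coef (S M) (S i) = (INR (S M) + INR i) * leg_coef M i.
Proof.
  destruct (leg_coef_cases M i) as [H|[[k H]|[k H]]].
  - rewrite !leg_coef_vanish by (left; lia). ring.
  - rewrite !leg_coef_vanish by (right; exists k; lia). ring.
  - rewrite (leg_coef_parity (S M) (S i) k), (leg_coef_parity M i k) by lia.
    subst M. unfold C.
    replace (S (i + 2 * k) - k)%nat with (S (i + k)) by lia.
    replace (2 * S (i + 2 * k) - 2 * k)%nat with (S (S (2 * i + 2 * k))) by lia.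
    replace (S (S (2 * i + 2 * k)) - S (i + 2 * k))%nat with (S i) by lia.
    replace (i + 2 * k - k)%nat with (i + k)%nat by lia.
    replace (2 * (i + 2 * k) - 2 * k)%nat with (2 * i + 2 * k)%nat by lia.
    replace (2 * i + 2 * k - (i + 2 * k))%nat with i by lia.
    rewrite !fact_simpl, !mult_INR, !S_INR, !plus_INR, !mult_INR. simpl pow.
    replace (INR 2) with 2 by (simpl; ring).
    pose proof (INR_fact_neq_0 i). pose proof (INR_fact_neq_0 k).
    pose proof (INR_fact_neq_0 (i + k)). pose proof (INR_fact_neq_0 (2 * i + 2 * k)).
    pose proof (INR_fact_neq_0 (i + 2 * k)). pose proof (pos_INR k). pose proof (pos_INR i).
    field. repeat split; try lra; apply pow_nonzero; lra.
Qed.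

(* Coefficientwise form of P'_M = t P'_(M+1) - (M+1) P_(M+1). *)
Lemma leg_coef_diag M i :
  (INR (S M) - INR i) * leg_coef (S M) i + INR (S i) * leg_coef M (S i) = 0.
Proof.
  destruct (leg_coef_cases M (S i)) as [H|[[k H]|[k H]]].
  - rewrite (leg_coef_vanish M) by (left; lia).
    destruct (Nat.eq_dec i (S M)) as [->|Hn]; [ring|].
    rewrite leg_coef_vanish; [ring|].
    destruct (Nat.eq_dec i M); [right; exists O|left]; lia.
  - rewrite !leg_coef_vanish; [ring|right; exists k|right; exists (S k)]; lia.
  - rewrite (leg_coef_parity (S M) i (S k)), (leg_coef_parity M (S i) k) by lia.
    subst M. unfold C.
    replace (S (S i + 2 * k) - S k)%nat with (S (i + k)) by lia.
    replace (2 * S (S i + 2 * k) - 2 * S k)%nat with (S (S (2 * i + 2 * k))) by lia.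
    replace (S (S (2 * i + 2 * k)) - S (S i + 2 * k))%nat with i by lia.
    replace (S i + 2 * k - k)%nat with (S (i + k)) by lia.
    replace (2 * (S i + 2 * k) - 2 * k)%nat with (S (S (2 * i + 2 * k))) by lia.
    replace (S (S (2 * i + 2 * k)) - (S i + 2 * k))%nat with (S i) by lia.
    rewrite !fact_simpl, !mult_INR, !S_INR, !plus_INR, !mult_INR. simpl pow.
    replace (INR 2) with 2 by (simpl; ring).
    pose proof (INR_fact_neq_0 i). pose proof (INR_fact_neq_0 k).
    pose proof (INR_fact_neq_0 (i + k)). pose proof (INR_fact_neq_0 (2 * i + 2 * k)).
    pose proof (INR_fact_neq_0 (S i + 2 * k)). pose proof (pos_INR k). pose proof (pos_INR i).
    rewrite S_INR in *.
    field. repeat split; try lra; apply pow_nonzero; lra.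
Qed.

Definition poly_eval (a : nat -> R) (K : nat) (t : R) : R :=
  sum_f_R0 (fun j => a j * t ^ j) K.

Lemma poly_eval_extend a K K' t : (forall j, (K < j)%nat -> a j = 0) -> (K <= K')%nat ->
  poly_eval a K t = poly_eval a K' t.
Proof.
  intros H HK. induction HK as [|K' HK IH]; [reflexivity|].
  unfold poly_eval in *. rewrite tech5, <- IH, H by lia. ring.
Qed.

Lemma poly_eval_lincomb_zero (x y z : R) a b c K t :
  (forall j, x * a j + y * b j + z * c j = 0) ->
  x * poly_eval a K t + y * poly_eval b K t + z * poly_eval c K t = 0.
Proof.
  intros H. unfold poly_eval. rewrite !scal_sum, <- !plus_sum.
  apply sum_eq_R0. intros j _. rewrite <- (Rmult_0_l (t ^ j)), <- (H j). ring.
Qed.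

Lemma poly_eval_mul_var a K t :
  t * poly_eval (fun i => INR (S i) * a (S i)) K t = poly_eval (fun j => INR j * a j) (S K) t.
Proof.
  unfold poly_eval. induction K as [|K IH].
  - simpl. ring.
  - rewrite tech5, Rmult_plus_distr_l, IH, (tech5 _ (S K)). simpl. ring.
Qed.

Lemma legendre_deriv_0 N t : legendre_deriv N 0 t = poly_eval (leg_coef N) N t.
Proof.
  apply sum_eq. intros j _. simpl. rewrite Nat.sub_0_r.
  field. apply INR_fact_neq_0.
Qed.

Lemma legendre_deriv_1 N t :
  legendre_deriv N 1 t = poly_eval (fun i => INR (S i) * leg_coef N (S i)) N t.
Proof.
  unfold legendre_deriv, poly_eval.
  set (f := fun j => if (1 <=? j)%nat
                     then leg_coef N j * (INR (fact j) / INR (fact (j - 1))) * t ^ (j - 1)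
                     else 0).
  transitivity (sum_f_R0 f (S N)).
  { rewrite tech5. replace (f (S N)) with 0; [ring|].
    unfold f. rewrite leg_coef_vanish by (left; lia). destruct (1 <=? S N)%nat; ring. }
  rewrite decomp_sum by lia. replace (f 0%nat) with 0 by reflexivity.
  rewrite Rplus_0_l. simpl pred.
  apply sum_eq. intros i _. unfold f. change (1 <=? S i)%nat with true. cbv iota.
  replace (S i - 1)%nat with i by lia. rewrite fact_simpl, mult_INR.
  field. apply INR_fact_neq_0.
Qed.

Lemma legendre_deriv_succ_deg M l t :
  legendre_deriv (S M) (S l) t
  = t * legendre_deriv M (S l) t + (INR M + 1 + INR l) * legendre_deriv M l t.
Proof.
  revert t; induction l as [|l IH]; intro t.
  - change (INR 0) with 0. rewrite Rplus_0_r, legendre_deriv_0, !legendre_deriv_1, poly_eval_mul_var.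
    rewrite (poly_eval_extend (leg_coef M) M (S M))
      by first [lia | intros; apply leg_coef_vanish; left; lia].
    refine (_ (poly_eval_lincomb_zero 1 (-1) (-(INR M + 1))
      (fun i => INR (S i) * leg_coef (S M) (S i)) (fun j => INR j * leg_coef M j)
      (leg_coef M) (S M) t _)); [intro; lra|].
    intro j. pose proof (leg_coef_shift M j). rewrite !S_INR in *. lra.
  - (* differentiating the identity for order l gives the one for order l + 1 *)
    eapply eq_trans; [eapply (derivable_pt_lim_unique_ext _ _ t _ _ IH);
      [apply legendre_deriv_derivable | derive] |].
    rewrite S_INR. ring.
Qed.

Lemma legendre_deriv_pred_deg_succ M l t :
  legendre_deriv M (S l) t
  = t * legendre_deriv (S M) (S l) t - (INR M + 1 - INR l) * legendre_deriv (S M) l t.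
Proof.
  revert t; induction l as [|l IH]; intro t.
  - change (INR 0) with 0. rewrite Rminus_0_r, legendre_deriv_0, !legendre_deriv_1, poly_eval_mul_var.
    rewrite (poly_eval_extend (fun i => _ * leg_coef M _) M (S (S M)))
      by first [lia | intros; rewrite leg_coef_vanish by (left; lia); ring].
    rewrite (poly_eval_extend (leg_coef (S M)) (S M) (S (S M)))
      by first [lia | intros; apply leg_coef_vanish; left; lia].
    refine (_ (poly_eval_lincomb_zero 1 (-1) (INR M + 1)
      (fun i => INR (S i) * leg_coef M (S i)) (fun j => INR j * leg_coef (S M) j)
      (leg_coef (S M)) (S (S M)) t _)); [intro; lra|].
    intro j. pose proof (leg_coef_diag M j). rewrite !S_INR in *. lra.
  - eapply eq_trans; [eapply (derivable_pt_lim_unique_ext _ _ t _ _ IH);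
      [apply legendre_deriv_derivable | derive] |].
    rewrite S_INR. ring.
Qed.

Lemma legendre_deriv_pred_deg M l t :
  (INR M + 1 + INR l) * legendre_deriv M l t
  = (INR M + 1 - INR l) * t * legendre_deriv (S M) l t
    + (1 - t ^ 2) * legendre_deriv (S M) (S l) t.
Proof.
  pose proof (legendre_deriv_succ_deg M l t) as Hs.
  rewrite (legendre_deriv_pred_deg_succ M l t) in Hs. lra.
Qed.

Lemma legendre_ode_deriv M p t :
  (1 - t ^ 2) * legendre_deriv M (S (S p)) t - 2 * (INR p + 1) * t * legendre_deriv M (S p) t
  + (INR M * (INR M + 1) - INR p * (INR p + 1)) * legendre_deriv M p t = 0.
Proof.
  revert t; induction p as [|p IH]; intro t.
  - destruct M as [|M].
    + unfold legendre_deriv. simpl. ring.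
    + pose proof (legendre_deriv_pred_deg M 1 t) as H1.
      rewrite (legendre_deriv_pred_deg_succ M 0 t) in H1.
      rewrite S_INR in *. change (INR 0) with 0 in *. change (INR 1) with 1 in *. lra.
  - eapply eq_trans; [|eapply (derivable_pt_lim_unique_ext _ (fun _ => 0) t _ _ IH);
      [derive | apply derivable_pt_lim_const]].
    rewrite S_INR. simpl pred. change (INR 2) with 2. ring.
Qed.

Lemma legendre_deriv_pred_deg_pred M p t :
  (INR M + INR p + 2) * (INR M + INR p + 1) * legendre_deriv M p t
  = 2 * (INR p + 1) * legendre_deriv (S M) (S p) t - (1 - t ^ 2) * legendre_deriv M (S (S p)) t.
Proof.
  pose proof (legendre_ode_deriv M p t). rewrite (legendre_deriv_succ_deg M p t). lra.
Qed.

(** * Chebyshev polynomials and powers of x1 + i x2 *)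

Lemma cheb_succ l c :
  chebT (S l) c = c * chebT l c - (1 - c ^ 2) * chebUm1 l c /\
  chebUm1 (S l) c = chebT l c + c * chebUm1 l c.
Proof.
  enough (H : forall k, (k <= S l)%nat ->
    chebT (S k) c = c * chebT k c - (1 - c ^ 2) * chebUm1 k c /\
    chebUm1 (S k) c = chebT k c + c * chebUm1 k c) by (apply H; lia).
  induction l as [|l IH]; intros k Hk.
  - destruct k as [|[|k]]; [| |lia]; simpl; split; ring.
  - destruct (Nat.eq_dec k (S (S l))) as [->|Hne]; [|apply IH; lia].
    destruct (IH (S l)) as [HT1 HU1]; [lia|]. destruct (IH l) as [HT0 HU0]; [lia|].
    change (chebT (S (S (S l))) c) with (2 * c * chebT (S (S l)) c - chebT (S l) c).
    change (chebUm1 (S (S (S l))) c) with (2 * c * chebUm1 (S (S l)) c - chebUm1 (S l) c).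
    rewrite HT1, HU1. rewrite HT0, HU0 in *. split; ring.
Qed.

Lemma cheb_succ_succ p c :
  chebT (S (S p)) c = 2 * c * chebT (S p) c - chebT p c /\
  chebUm1 (S (S p)) c = 2 * c * chebUm1 (S p) c - chebUm1 p c /\
  chebUm1 (S (S p)) c = 2 * chebT (S p) c + chebUm1 p c /\
  chebT (S (S p)) c = chebT p c - 2 * (1 - c ^ 2) * chebUm1 (S p) c.
Proof.
  destruct (cheb_succ p c) as [HT HU].
  change (chebT (S (S p)) c) with (2 * c * chebT (S p) c - chebT p c).
  change (chebUm1 (S (S p)) c) with (2 * c * chebUm1 (S p) c - chebUm1 p c).
  rewrite HT, HU. repeat split; ring.
Qed.

(* [(cpow_re l a b, cpow_im l a b)] are the real and imaginary parts of [(a + i b) ^ l]. *)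
Fixpoint cpow (l : nat) (a b : R) : R * R :=
  match l with
  | O => (1, 0)
  | S l => (a * fst (cpow l a b) - b * snd (cpow l a b),
            b * fst (cpow l a b) + a * snd (cpow l a b))
  end.
Definition cpow_re l a b := fst (cpow l a b).
Definition cpow_im l a b := snd (cpow l a b).

Lemma cpow_polar l r c s : c ^ 2 + s ^ 2 = 1 ->
  cpow_re l (r * c) (r * s) = r ^ l * chebT l c /\
  cpow_im l (r * c) (r * s) = r ^ l * s * chebUm1 l c.
Proof.
  intros Hcs. unfold cpow_re, cpow_im.
  induction l as [|l [IA IB]]; [split; simpl; ring|].
  simpl fst; simpl snd. rewrite IA, IB.
  destruct (cheb_succ l c) as [-> ->]. replace (1 - c ^ 2) with (s ^ 2) by lra.
  split; simpl; ring.
Qed.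

Lemma cpow_succ_pred l a b :
  INR l * cpow_re l a b = INR l * (a * cpow_re (pred l) a b - b * cpow_im (pred l) a b) /\
  INR l * cpow_im l a b = INR l * (b * cpow_re (pred l) a b + a * cpow_im (pred l) a b).
Proof.
  unfold cpow_re, cpow_im.
  destruct l; [change (INR 0) with 0|]; cbn [cpow fst snd pred]; split; ring.
Qed.

Lemma cpow_deriv_fst l a b :
  derivable_pt_lim (fun u => cpow_re l u b) a (INR l * cpow_re (pred l) a b) /\
  derivable_pt_lim (fun u => cpow_im l u b) a (INR l * cpow_im (pred l) a b).
Proof.
  induction l as [|l [IA IB]];
    [split; (eapply derivable_pt_lim_eq_val; [apply derivable_pt_lim_const|simpl; ring])|].
  destruct (cpow_succ_pred l a b) as [EA EB].
  change (fun u => cpow_re (S l) u b) with (fun u => u * cpow_re l u b - b * cpow_im l u b).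
  change (fun u => cpow_im (S l) u b) with (fun u => b * cpow_re l u b + u * cpow_im l u b).
  split; (eapply derivable_pt_lim_eq_val; [derive|]); cbv beta; simpl pred; rewrite S_INR; lra.
Qed.

Lemma cpow_deriv_snd l a b :
  derivable_pt_lim (fun u => cpow_re l a u) b (- INR l * cpow_im (pred l) a b) /\
  derivable_pt_lim (fun u => cpow_im l a u) b (INR l * cpow_re (pred l) a b).
Proof.
  induction l as [|l [IA IB]];
    [split; (eapply derivable_pt_lim_eq_val; [apply derivable_pt_lim_const|simpl; ring])|].
  destruct (cpow_succ_pred l a b) as [EA EB].
  change (fun u => cpow_re (S l) a u) with (fun u => a * cpow_re l a u - u * cpow_im l a u).
  change (fun u => cpow_im (S l) a u) with (fun u => u * cpow_re l a u + a * cpow_im l a u).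
  split; (eapply derivable_pt_lim_eq_val; [derive|]); cbv beta; simpl pred; rewrite S_INR; lra.
Qed.

Lemma cpow_at_0 l : cpow_re l 0 0 = 0 ^ l /\ cpow_im l 0 0 = 0.
Proof. unfold cpow_re, cpow_im. destruct l; simpl; split; ring. Qed.

(** * Cartesian form of r^N U^l_N and r^N V^l_N *)

Lemma rad_sq y : rad y ^ 2 = px0 y ^ 2 + px1 y ^ 2 + px2 y ^ 2.
Proof. apply pow2_sqrt. nra. Qed.

Lemma rho_sq y : rho y ^ 2 = px1 y ^ 2 + px2 y ^ 2.
Proof. apply pow2_sqrt. nra. Qed.

Lemma rad_eq_0 y : rad y = 0 -> px0 y = 0 /\ px1 y = 0 /\ px2 y = 0.
Proof. intros H. pose proof (rad_sq y). rewrite H in *. nra. Qed.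

Lemma rad_pos y : rad y <> 0 -> 0 < rad y.
Proof. intros H. pose proof (sqrt_pos (px0 y ^ 2 + px1 y ^ 2 + px2 y ^ 2)). unfold rad in *. lra. Qed.

Lemma rho_eq_0 y : rho y = 0 -> px1 y = 0 /\ px2 y = 0.
Proof. intros H. pose proof (rho_sq y). rewrite H in *. nra. Qed.

Lemma cpow_cheb l y :
  cpow_re l (px1 y) (px2 y) = rho y ^ l * chebT l (cth2 y) /\
  cpow_im l (px1 y) (px2 y) = rho y ^ l * sth2 y * chebUm1 l (cth2 y).
Proof.
  unfold cth2, sth2. destruct (Req_EM_T (rho y) 0) as [E|E].
  - destruct (rho_eq_0 y E) as [-> ->]. rewrite E. destruct (cpow_at_0 l) as [-> ->].
    destruct l; simpl; split; ring.
  - assert (Hrho : 0 < rho y) by (pose proof (sqrt_pos (px1 y ^ 2 + px2 y ^ 2)); unfold rho in *; lra).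
    assert (Hcs : (px1 y / rho y) ^ 2 + (px2 y / rho y) ^ 2 = 1).
    { replace (_ + _) with ((px1 y ^ 2 + px2 y ^ 2) / rho y ^ 2) by (field; lra).
      rewrite <- rho_sq. field. lra. }
    destruct (cpow_polar l (rho y) _ _ Hcs) as [HA HB].
    replace (rho y * (px1 y / rho y)) with (px1 y) in * by (field; lra).
    replace (rho y * (px2 y / rho y)) with (px2 y) in * by (field; lra).
    now split.
Qed.

Definition radial (N l : nat) (y : pt) : R :=
  rad y ^ (N - l) * legendre_deriv N l (px0 y / rad y).

Lemma rad_pow_assoc_legendre N l y : 0 < rad y ->
  rad y ^ N * assoc_legendre N l (cth1 y) = rho y ^ l * radial N l y.
Proof.
  intros Hr. unfold assoc_legendre, radial, cth1.
  assert (Hs : sqrt (1 - (px0 y / rad y) ^ 2) = rho y / rad y).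
  { rewrite <- (sqrt_pow2 (rho y / rad y)).
    - f_equal. replace (_ - _) with ((rad y ^ 2 - px0 y ^ 2) / rad y ^ 2) by (field; lra).
      replace (rad y ^ 2 - px0 y ^ 2) with (rho y ^ 2) by (rewrite rad_sq, rho_sq; ring).
      field. lra.
    - unfold Rdiv. apply Rmult_le_pos; [apply sqrt_pos|left; now apply Rinv_0_lt_compat]. }
  rewrite Hs. destruct (Nat.le_gt_cases l N) as [Hl|Hl].
  - replace N with (l + (N - l))%nat at 1 by lia.
    unfold Rdiv. rewrite pow_add, Rpow_mult_distr, pow_inv. field.
    apply pow_nonzero; lra.
  - rewrite legendre_deriv_over by lia. ring.
Qed.

Lemma rU_cpow n l y :
  rU (S n) (S n) l y = cpow_re l (px1 y) (px2 y) * radial (S n) l y.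
Proof.
  destruct (Req_dec (rad y) 0) as [H0|H0].
  - unfold rU, radial. destruct (rad_eq_0 y H0) as (_ & -> & ->).
    rewrite H0. destruct (cpow_at_0 l) as [-> _]. destruct l; simpl; ring.
  - apply rad_pos in H0.
    unfold rU. rewrite (proj1 (cpow_cheb l y)).
    transitivity (rad y ^ S n * assoc_legendre (S n) l (cth1 y) * chebT l (cth2 y)); [ring|].
    rewrite rad_pow_assoc_legendre by exact H0. ring.
Qed.

Lemma rV_cpow n l y :
  rV (S n) (S n) l y = cpow_im l (px1 y) (px2 y) * radial (S n) l y.
Proof.
  destruct (Req_dec (rad y) 0) as [H0|H0].
  - unfold rV, radial. destruct (rad_eq_0 y H0) as (_ & -> & ->).
    rewrite H0. destruct (cpow_at_0 l) as [_ ->]. simpl. ring.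
  - apply rad_pos in H0.
    unfold rV. rewrite (proj2 (cpow_cheb l y)).
    transitivity (rad y ^ S n * assoc_legendre (S n) l (cth1 y) * sth2 y * chebUm1 l (cth2 y));
      [ring|].
    rewrite rad_pow_assoc_legendre by exact H0. ring.
Qed.

(** * Dbar of a polynomial in x1, x2 times the radial factor *)

Definition line (x v : pt) (t : R) : pt :=
  (px0 x + t * px0 v, px1 x + t * px1 v, px2 x + t * px2 v).

Lemma line_0 x v : line x v 0 = x.
Proof. destruct x as [[a b] c]. unfold line, px0, px1, px2; simpl. f_equal; [f_equal|]; ring. Qed.

Definition inner (x v : pt) : R := px0 x * px0 v + px1 x * px1 v + px2 x * px2 v.

Lemma rad_line_deriv x v : 0 < rad x ->
  derivable_pt_lim (fun t => rad (line x v t)) 0 (inner x v / rad x).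
Proof.
  intros Hr. destruct x as [[a0 a1] a2], v as [[v0 v1] v2].
  unfold rad, line, inner, px0, px1, px2 in *; cbn [fst snd] in *.
  assert (Hq : 0 < a0 ^ 2 + a1 ^ 2 + a2 ^ 2).
  { destruct (Rle_lt_or_eq_dec 0 (a0 ^ 2 + a1 ^ 2 + a2 ^ 2)) as [|E]; [nra|assumption|].
    rewrite <- E, sqrt_0 in Hr. lra. }
  eapply derivable_pt_lim_eq_val;
    [apply derivable_pt_lim_sqrt_comp; [rewrite !Rmult_0_l, !Rplus_0_r; exact Hq|derive]|].
  rewrite !Rmult_0_l, !Rplus_0_r. simpl pred. change (INR 2) with 2. field.
  apply Rgt_not_eq, sqrt_lt_R0, Hq.
Qed.

Definition radial_grad (N l : nat) (x v : pt) : R :=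
  let c := px0 x / rad x in
  let d := inner x v / rad x in
  rad x ^ (N - l) / rad x
  * (INR (N - l) * d * legendre_deriv N l c + (px0 v - c * d) * legendre_deriv N (S l) c).

Lemma INR_mul_pow_pred k r : r <> 0 -> INR k * r ^ pred k = INR k * (r ^ k / r).
Proof. intros H. destruct k; simpl; [ring|field; exact H]. Qed.

Lemma radial_line_deriv N l x v : 0 < rad x ->
  derivable_pt_lim (fun t => radial N l (line x v t)) 0 (radial_grad N l x v).
Proof.
  intros Hr. unfold radial, radial_grad.
  eapply derivable_pt_lim_eq_val.
  - apply derivable_pt_lim_mult.
    + apply derivable_pt_lim_pow_comp, rad_line_deriv, Hr.
    + apply (derivable_pt_lim_comp (fun t => px0 (line x v t) / rad (line x v t))).
      * apply derivable_pt_lim_quot; [rewrite line_0; lra| |apply rad_line_deriv, Hr].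
        unfold line, px0 at 1. cbn [fst]. derive.
      * apply legendre_deriv_derivable.
  - cbv beta. rewrite !line_0, INR_mul_pow_pred by lra. field. lra.
Qed.

Lemma has_Dbar_real (F : pt -> R) x W0 W1 W2 :
  derivable_pt_lim (fun t => F (shift x 0 t)) 0 W0 ->
  derivable_pt_lim (fun t => F (shift x 1 t)) 0 W1 ->
  derivable_pt_lim (fun t => F (shift x 2 t)) 0 W2 ->
  has_Dbar (fun y => qR (F y)) x (mkQ W0 (- W1) (- W2) 0).
Proof.
  intros H0 H1 H2. exists (qR W0), (qR W1), (qR W2).
  unfold has_pderiv, qR; cbn [q0 q1 q2 q3].
  repeat split; try apply derivable_pt_lim_const; try assumption.
  unfold qsub, qadd, qopp, qmul, e1, e2; cbn [q0 q1 q2 q3]. f_equal; ring.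
Qed.

Lemma shift_line x t :
  shift x 0 t = line x (1, 0, 0) t /\ shift x 1 t = line x (0, 1, 0) t /\
  shift x 2 t = line x (0, 0, 1) t.
Proof.
  destruct x as [[a0 a1] a2]. unfold shift, line, px0, px1, px2; cbn [fst snd].
  repeat split; repeat f_equal; ring.
Qed.

Lemma has_Dbar_mul_radial (P : R -> R -> R) dP1 dP2 N l x : 0 < rad x ->
  derivable_pt_lim (fun u => P u (px2 x)) (px1 x) dP1 ->
  derivable_pt_lim (fun u => P (px1 x) u) (px2 x) dP2 ->
  has_Dbar (fun y => qR (P (px1 y) (px2 y) * radial N l y)) x
    (mkQ (P (px1 x) (px2 x) * radial_grad N l x (1, 0, 0))
         (- (dP1 * radial N l x + P (px1 x) (px2 x) * radial_grad N l x (0, 1, 0)))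
         (- (dP2 * radial N l x + P (px1 x) (px2 x) * radial_grad N l x (0, 0, 1))) 0).
Proof.
  intros Hr H1 H2. apply has_Dbar_real.
  - apply (derivable_pt_lim_ext (fun t => P (px1 x) (px2 x) * radial N l (line x (1, 0, 0) t))).
    { intro t. now rewrite <- (proj1 (shift_line x t)). }
    eapply derivable_pt_lim_eq_val;
      [apply derivable_pt_lim_mult; [apply derivable_pt_lim_const|apply radial_line_deriv, Hr]|].
    cbv beta. ring.
  - apply (derivable_pt_lim_ext
      (fun t => P (px1 x + t) (px2 x) * radial N l (line x (0, 1, 0) t))).
    { intro t. now rewrite <- (proj1 (proj2 (shift_line x t))). }
    eapply derivable_pt_lim_eq_val.
    + apply derivable_pt_lim_mult; [|apply radial_line_deriv, Hr].
      apply (derivable_pt_lim_comp (fun t => px1 x + t) (fun u => P u (px2 x))); [derive|].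
      rewrite Rplus_0_r. exact H1.
    + cbv beta. rewrite Rplus_0_r, line_0. ring.
  - apply (derivable_pt_lim_ext
      (fun t => P (px1 x) (px2 x + t) * radial N l (line x (0, 0, 1) t))).
    { intro t. now rewrite <- (proj2 (proj2 (shift_line x t))). }
    eapply derivable_pt_lim_eq_val.
    + apply derivable_pt_lim_mult; [|apply radial_line_deriv, Hr].
      apply (derivable_pt_lim_comp (fun t => px2 x + t) (fun u => P (px1 x) u)); [derive|].
      rewrite Rplus_0_r. exact H2.
    + cbv beta. rewrite Rplus_0_r, line_0. ring.
Qed.

(** * Spherical coordinates *)

Lemma rad_sph r th1 th2 : 0 < r -> rad (sph r th1 th2) = r.
Proof.
  intros Hr. unfold rad, sph, px0, px1, px2; cbn [fst snd].
  transitivity (sqrt (r ^ 2)); [f_equal|apply sqrt_pow2; lra].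
  pose proof (sin2_cos2 th1) as H1. pose proof (sin2_cos2 th2) as H2. unfold Rsqr in *.
  transitivity (r ^ 2 * (sin th1 ^ 2 * (sin th2 ^ 2 + cos th2 ^ 2) + cos th1 ^ 2)); [ring|].
  replace (sin th2 ^ 2 + cos th2 ^ 2) with 1 by (simpl; lra).
  replace (sin th1 ^ 2 * 1 + cos th1 ^ 2) with 1 by (simpl; lra). ring.
Qed.

Lemma sqrt_one_minus_cos_sq th : 0 <= th <= PI -> sqrt (1 - cos th ^ 2) = sin th.
Proof.
  intros H. rewrite <- (sqrt_pow2 (sin th)) by (apply sin_ge_0; lra).
  f_equal. pose proof (sin2_cos2 th). unfold Rsqr in *. simpl. lra.
Qed.

Lemma radial_sph N l r th1 th2 : 0 < r ->
  radial N l (sph r th1 th2) = r ^ (N - l) * legendre_deriv N l (cos th1).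
Proof.
  intros Hr. unfold radial. rewrite rad_sph by exact Hr.
  unfold sph, px0; cbn [fst]. now replace (r * cos th1 / r) with (cos th1) by (field; lra).
Qed.

(* [(1/2) Dbar (P(x1, x2) radial (S n) l)] at the point with spherical coordinates
   [(r, th1, th2)], where [dP1] and [dP2] are the partial derivatives of [P] there. *)
Definition dagger_sph (n l : nat) (r th1 th2 P dP1 dP2 : R) : quat :=
  let c := cos th1 in
  let G0 := legendre_deriv (S n) l c in
  let G1 := legendre_deriv (S n) (S l) c in
  let k := INR (S n - l) in
  let K := r ^ (S n - l) / r in
  qscale (1 / 2)
    (mkQ (P * K * (k * c * G0 + (1 - c ^ 2) * G1))
         (- (dP1 * r ^ (S n - l) * G0 + P * K * sin th1 * cos th2 * (k * G0 - c * G1)))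
         (- (dP2 * r ^ (S n - l) * G0 + P * K * sin th1 * sin th2 * (k * G0 - c * G1)))
         0).

Lemma half_Dbar_mul_radial_sph (P : R -> R -> R) dP1 dP2 n l r th1 th2 : 0 < r ->
  derivable_pt_lim (fun u => P u (r * sin th1 * sin th2)) (r * sin th1 * cos th2) dP1 ->
  derivable_pt_lim (fun u => P (r * sin th1 * cos th2) u) (r * sin th1 * sin th2) dP2 ->
  exists w, has_Dbar (fun y => qR (P (px1 y) (px2 y) * radial (S n) l y)) (sph r th1 th2) w
    /\ dagger_sph n l r th1 th2 (P (r * sin th1 * cos th2) (r * sin th1 * sin th2)) dP1 dP2
        = qscale (1 / 2) w.
Proof.
  intros Hr H1 H2. eexists. split.
  - apply has_Dbar_mul_radial; [now rewrite rad_sph|exact H1|exact H2].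
  - rewrite radial_sph by exact Hr.
    unfold dagger_sph, radial_grad, inner. rewrite rad_sph by exact Hr.
    unfold sph, px0, px1, px2; cbn [fst snd].
    replace (r * cos th1 / r) with (cos th1) by (field; lra).
    unfold qscale, qmul, qR; cbn [q0 q1 q2 q3]. f_equal; field; lra.
Qed.

Lemma Xdag_at_sph n l r th1 th2 v : 0 < r ->
  let a := r * sin th1 * cos th2 in
  let b := r * sin th1 * sin th2 in
  v = dagger_sph n l r th1 th2 (cpow_re l a b)
        (INR l * cpow_re (pred l) a b) (- INR l * cpow_im (pred l) a b) ->
  Xdag_at n l (sph r th1 th2) v.
Proof.
  intros Hr a b ->. unfold Xdag_at.
  replace (fun y => qR (rU (S n) (S n) l y))
    with (fun y => qR (cpow_re l (px1 y) (px2 y) * radial (S n) l y))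
    by (extensionality y; now rewrite rU_cpow).
  apply half_Dbar_mul_radial_sph;
    [exact Hr|apply (cpow_deriv_fst l a b)|apply (cpow_deriv_snd l a b)].
Qed.

Lemma Ydag_at_sph n l r th1 th2 v : 0 < r ->
  let a := r * sin th1 * cos th2 in
  let b := r * sin th1 * sin th2 in
  v = dagger_sph n l r th1 th2 (cpow_im l a b)
        (INR l * cpow_im (pred l) a b) (INR l * cpow_re (pred l) a b) ->
  Ydag_at n l (sph r th1 th2) v.
Proof.
  intros Hr a b ->. unfold Ydag_at.
  replace (fun y => qR (rV (S n) (S n) l y))
    with (fun y => qR (cpow_im l (px1 y) (px2 y) * radial (S n) l y))
    by (extensionality y; now rewrite rV_cpow).
  apply half_Dbar_mul_radial_sph;
    [exact Hr|apply (cpow_deriv_fst l a b)|apply (cpow_deriv_snd l a b)].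
Qed.

Lemma eq_div_of_mul a b c : b * a = c -> b <> 0 -> a = c / b.
Proof. intros <- Hb. field. exact Hb. Qed.

Lemma Xdag_zero n r th1 th2 : 0 < r -> 0 < th1 <= PI ->
  Xdag_at n 0 (sph r th1 th2)
    (qscale (r ^ n)
      (qadd (qR (INR (n + 1) / 2 * Uharm n 0 th1 th2))
      (qadd (qmul (qR (1 / 2 * Uharm n 1 th1 th2)) e1)
            (qmul (qR (1 / 2 * Vharm n 1 th1 th2)) e2)))).
Proof.
  intros Hr Hth. apply Xdag_at_sph; [exact Hr|]. cbv zeta.
  unfold dagger_sph, Uharm, Vharm, assoc_legendre.
  rewrite sqrt_one_minus_cos_sq by lra.
  set (c := cos th1) in *.
  pose proof (legendre_deriv_pred_deg n 0 c) as H0.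
  rewrite (eq_div_of_mul _ _ _ H0) by (pose proof (pos_INR n); simpl; lra).
  rewrite (legendre_deriv_pred_deg_succ n 0 c), Nat.sub_0_r, plus_INR, !S_INR.
  change (INR 0) with 0. change (INR 1) with 1.
  unfold qscale, qadd, qmul, qR, e1, e2, cpow_re; cbn [q0 q1 q2 q3 cpow fst snd chebT chebUm1 pow].
  pose proof (pos_INR n). f_equal; field; lra.
Qed.

Lemma Xdag_succ n p r th1 th2 : 0 < r -> 0 < th1 <= PI -> (p <= n)%nat ->
  Xdag_at n (S p) (sph r th1 th2)
    (qscale (r ^ n)
      (qadd (qR (INR (n + S p + 1) / 2 * Uharm n (S p) th1 th2))
      (qadd (qmul (qR (1 / 4 * Rpm (-1) n (S p) th1 th2)) e1)
            (qmul (qR (1 / 4 * Spm 1 n (S p) th1 th2)) e2)))).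
Proof.
  intros Hr Hth Hp. apply Xdag_at_sph; [exact Hr|]. cbv zeta. change (pred (S p)) with p.
  destruct (Nat.le_exists_sub p n Hp) as [k [-> _]].
  assert (HCS : cos th2 ^ 2 + sin th2 ^ 2 = 1)
    by (pose proof (sin2_cos2 th2); unfold Rsqr in *; simpl; lra).
  assert (Hcs : 1 - cos th1 ^ 2 = sin th1 ^ 2)
    by (pose proof (sin2_cos2 th1); unfold Rsqr in *; simpl; lra).
  destruct (cpow_polar (S p) (r * sin th1) _ _ HCS) as [-> _].
  destruct (cpow_polar p (r * sin th1) _ _ HCS) as [-> ->].
  destruct (cheb_succ_succ p (cos th2)) as (HT & _ & HU & _).
  unfold dagger_sph, Rpm, Spm, Uharm, Vharm, assoc_legendre.
  rewrite sqrt_one_minus_cos_sq, HT, HU by lra.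
  replace (S p - 1)%nat with p by lia. replace (S (k + p) - S p)%nat with k by lia.
  set (c := cos th1) in *.
  pose proof (legendre_deriv_pred_deg_pred (k + p) p c) as H3.
  pose proof (legendre_deriv_pred_deg (k + p) (S p) c) as H1.
  pose proof (pos_INR k). pose proof (pos_INR p). rewrite !S_INR, !plus_INR in *.
  rewrite (eq_div_of_mul _ _ _ H3) by nra.
  rewrite (legendre_deriv_pred_deg_succ (k + p) (S p) c), (eq_div_of_mul _ _ _ H1) by lra.
  rewrite !S_INR, !plus_INR, Hcs. change (INR 0) with 0.
  unfold qscale, qadd, qmul, qR, e1, e2; cbn [q0 q1 q2 q3].
  rewrite !Rpow_mult_distr, !pow_add, <- !tech_pow_Rmult.
  f_equal; field; nra.
Qed.

Lemma Ydag_succ n p r th1 th2 : 0 < r -> 0 < th1 <= PI -> (p <= n)%nat ->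
  Ydag_at n (S p) (sph r th1 th2)
    (qscale (r ^ n)
      (qadd (qR (INR (n + S p + 1) / 2 * Vharm n (S p) th1 th2))
      (qsub (qmul (qR (1 / 4 * Spm (-1) n (S p) th1 th2)) e1)
            (qmul (qR (1 / 4 * Rpm 1 n (S p) th1 th2)) e2)))).
Proof.
  intros Hr Hth Hp. apply Ydag_at_sph; [exact Hr|]. cbv zeta. change (pred (S p)) with p.
  destruct (Nat.le_exists_sub p n Hp) as [k [-> _]].
  assert (HCS : cos th2 ^ 2 + sin th2 ^ 2 = 1)
    by (pose proof (sin2_cos2 th2); unfold Rsqr in *; simpl; lra).
  assert (Hcs : 1 - cos th1 ^ 2 = sin th1 ^ 2)
    by (pose proof (sin2_cos2 th1); unfold Rsqr in *; simpl; lra).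
  destruct (cpow_polar (S p) (r * sin th1) _ _ HCS) as [_ ->].
  destruct (cpow_polar p (r * sin th1) _ _ HCS) as [-> ->].
  destruct (cheb_succ_succ p (cos th2)) as (_ & HU & _ & HT).
  unfold dagger_sph, Rpm, Spm, Uharm, Vharm, assoc_legendre.
  rewrite sqrt_one_minus_cos_sq, HT, HU by lra.
  replace (1 - cos th2 ^ 2) with (sin th2 ^ 2) by lra.
  replace (S p - 1)%nat with p by lia. replace (S (k + p) - S p)%nat with k by lia.
  set (c := cos th1) in *.
  pose proof (legendre_deriv_pred_deg_pred (k + p) p c) as H3.
  pose proof (legendre_deriv_pred_deg (k + p) (S p) c) as H1.
  pose proof (pos_INR k). pose proof (pos_INR p). rewrite !S_INR, !plus_INR in *.
  rewrite (eq_div_of_mul _ _ _ H3) by nra.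
  rewrite (legendre_deriv_pred_deg_succ (k + p) (S p) c), (eq_div_of_mul _ _ _ H1) by lra.
  rewrite !S_INR, !plus_INR, Hcs. change (INR 0) with 0.
  unfold qsub, qscale, qadd, qopp, qmul, qR, e1, e2; cbn [q0 q1 q2 q3].
  rewrite !Rpow_mult_distr, !pow_add, <- !tech_pow_Rmult.
  f_equal; field; nra.
Qed.

Theorem proposition1 :
  forall (n : nat) (r th1 th2 : R),
    0 < r -> 0 < th1 <= PI -> 0 < th2 <= 2 * PI ->
    Xdag_at n 0 (sph r th1 th2)
      (qscale (r ^ n)
        (qadd (qR (INR (n + 1) / 2 * Uharm n 0 th1 th2))
        (qadd (qmul (qR (1 / 2 * Uharm n 1 th1 th2)) e1)
              (qmul (qR (1 / 2 * Vharm n 1 th1 th2)) e2)))) /\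
    (forall m : nat, (1 <= m <= n + 1)%nat ->
      Xdag_at n m (sph r th1 th2)
        (qscale (r ^ n)
          (qadd (qR (INR (n + m + 1) / 2 * Uharm n m th1 th2))
          (qadd (qmul (qR (1 / 4 * Rpm (-1) n m th1 th2)) e1)
                (qmul (qR (1 / 4 * Spm 1 n m th1 th2)) e2)))) /\
      Ydag_at n m (sph r th1 th2)
        (qscale (r ^ n)
          (qadd (qR (INR (n + m + 1) / 2 * Vharm n m th1 th2))
          (qsub (qmul (qR (1 / 4 * Spm (-1) n m th1 th2)) e1)
                (qmul (qR (1 / 4 * Rpm 1 n m th1 th2)) e2))))).
Proof.
  intros n r th1 th2 Hr Hth1 _. split; [now apply Xdag_zero|].
  intros [|p] Hm; [lia|].
  split; [apply Xdag_succ|apply Ydag_succ]; auto; lia.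
Qed.
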